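(* Let $A$ be an arbitrary group. Then $A$ can be embedded into a group $G$ such that $PJ(G)=J_0(G)=X(G)$. Hence Jensen's functional equation $f(xy)+f(xy^{-1})=2f(x)$ is stable on $G$, i.e. for every function $f\colon G\to\mathbb{R}$ for which there is $c>0$ with $|f(xy)+f(xy^{-1})-2f(x)|\le c$ for all $x,y\in G$, there is $j\colon G\to\mathbb{R}$ with $j(xy)+j(xy^{-1})=2j(x)$ for all $x,y$ and $j-f$ bounded.
   Context: For a group $G$: a function $f\colon G\to\mathbb{R}$ is quasi-Jensen if there is $c>0$ with $|f(xy)+f(xy^{-1})-2f(x)|\le c$ for all $x,y\in G$; it is pseudo-Jensen if it is quasi-Jensen and $f(x^n)=nf(x)$ for all $x\in G$, $n\in\mathbb{Z}$. $PJ(G)$ is the space of real-valued pseudo-Jensen functions on $G$. $J_0(G)$ is the space of functions $f\colon G\to\mathbb{R}$ with $f(xy)+f(xy^{-1})=2f(x)$ for all $x,y\in G$ and $f(1)=0$. $X(G)$ is the space of homomorphisms $G\to(\mathbb{R},+)$. *)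

From Stdlib Require Import Reals ZArith.
Open Scope R_scope.

Record group_on (T : Type) := GroupOn {
  gmul : T -> T -> T;
  gone : T;
  ginv : T -> T;
  gmulA : forall x y z, gmul x (gmul y z) = gmul (gmul x y) z;
  gmul1g : forall x, gmul gone x = x;
  gmulVg : forall x, gmul (ginv x) x = gone
}.
Arguments gmul {T} g _ _.
Arguments gone {T} g.
Arguments ginv {T} g _.

Fixpoint gpow_nat {T} (g : group_on T) (x : T) (n : nat) : T :=
  match n with
  | O => gone g
  | S m => gmul g x (gpow_nat g x m)
  end.

Definition gpow {T} (g : group_on T) (x : T) (n : Z) : T :=
  match n with
  | Z0 => gone g
  | Zpos p => gpow_nat g x (Pos.to_nat p)
  | Zneg p => ginv g (gpow_nat g x (Pos.to_nat p))
  end.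

Definition group_hom {A G} (gA : group_on A) (gG : group_on G) (phi : A -> G) : Prop :=
  forall x y, phi (gmul gA x y) = gmul gG (phi x) (phi y).

Definition quasi_Jensen {G} (g : group_on G) (f : G -> R) : Prop :=
  exists c, 0 < c /\ forall x y,
    Rabs (f (gmul g x y) + f (gmul g x (ginv g y)) - 2 * f x) <= c.

Definition pseudo_Jensen {G} (g : group_on G) (f : G -> R) : Prop :=
  quasi_Jensen g f /\ forall x (n : Z), f (gpow g x n) = IZR n * f x.

Definition J0 {G} (g : group_on G) (f : G -> R) : Prop :=
  (forall x y, f (gmul g x y) + f (gmul g x (ginv g y)) = 2 * f x) /\ f (gone g) = 0.

Definition X_hom {G} (g : group_on G) (f : G -> R) : Prop :=
  forall x y, f (gmul g x y) = f x + f y.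

Definition is_Jensen {G} (g : group_on G) (j : G -> R) : Prop :=
  forall x y, j (gmul g x y) + j (gmul g x (ginv g y)) = 2 * j x.

Definition bounded_fun {G} (h : G -> R) : Prop := exists M, forall x, Rabs (h x) <= M.

(* Take G = A wr D_oo, the unrestricted wreath product A^Z >< D_oo, with A
   embedded as the constant functions.  Every element of G is a product of at
   most six involutions: writing its coordinate function as n |-> p n (p (n-1))^-1
   for a suitable p : Z -> A, it becomes a product of two reflections of Z
   decorated by coboundaries of p, followed by three or four plain
   reflections.
   Since t^-1 = t for an involution t, a quasi-Jensen f satisfies
   |f(xt) - f(x)| <= c/2, so f is bounded on G; a bounded f with
   f(x^n) = n f(x) vanishes, and a Jensen function is invariant under right
   multiplication by involutions, hence constant. *)

From Stdlib Require Import Reals ZArith.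
Open Scope R_scope.
From Stdlib Require Import Lia Lra List FunctionalExtensionality.
Import ListNotations.

Ltac rabs_lra :=
  unfold Rabs in *;
  repeat match goal with
         | |- context [Rcase_abs ?x] => destruct (Rcase_abs x)
         | H : context [Rcase_abs ?x] |- _ => destruct (Rcase_abs x)
         end;
  lra.

Lemma multiples_bounded_nonpos (a M : R) : (forall n : Z, IZR n * a <= M) -> a <= 0.
Proof.
  intros H. destruct (Rle_or_lt a 0) as [Ha | Ha]; [exact Ha |].
  destruct (INR_archimed a M Ha) as [n Hn].
  specialize (H (Z.of_nat n)). rewrite <- INR_IZR_INZ in H. lra.
Qed.

Section Group.
Context {T : Type} (g : group_on T).
Local Notation "x ** y" := (gmul g x y) (at level 40, left associativity).
Local Notation "1" := (gone g).
Local Notation inv := (ginv g).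

Lemma gmulgV x : x ** inv x = 1.
Proof.
  rewrite <- (gmul1g _ g (x ** inv x)), <- (gmulVg _ g (inv x)) at 1.
  rewrite <- gmulA, (gmulA _ g (inv x)), gmulVg, gmul1g, gmulVg. reflexivity.
Qed.

Lemma gmulg1 x : x ** 1 = x.
Proof. rewrite <- (gmulVg _ g x), gmulA, gmulgV, gmul1g. reflexivity. Qed.

Definition involution (t : T) : Prop := t ** t = 1.

Lemma involution_inv t : involution t -> inv t = t.
Proof.
  intro Ht. rewrite <- (gmulg1 (inv t)), <- Ht, gmulA, gmulVg, gmul1g. reflexivity.
Qed.

Definition involution_length_le (N : nat) : Prop :=
  forall x, exists ts, Forall involution ts /\ (length ts <= N)%nat /\ x = fold_left (gmul g) ts 1.

Lemma fold_involutions_dist_le (f : T -> R) (e : R) :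
  (forall x t, involution t -> Rabs (f (x ** t) - f x) <= e) ->
  forall ts y, Forall involution ts ->
  Rabs (f (fold_left (gmul g) ts y) - f y) <= INR (length ts) * e.
Proof.
  intros He ts. induction ts as [| t ts IH]; intros y Hts; cbn [fold_left length].
  - rewrite Rminus_diag, Rabs_R0. simpl. lra.
  - inversion_clear Hts as [| ? ? Ht Hts'].
    specialize (IH (y ** t) Hts'). specialize (He y t Ht).
    rewrite S_INR. rabs_lra.
Qed.

Lemma quasi_Jensen_involution_lipschitz (f : T -> R) : quasi_Jensen g f ->
  exists e, 0 <= e /\ forall x t, involution t -> Rabs (f (x ** t) - f x) <= e.
Proof.
  intros [c [Hc0 Hc]]. exists (c / 2). split; [lra |]. intros x t Ht.
  specialize (Hc x t). rewrite (involution_inv t Ht) in Hc. rabs_lra.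
Qed.

Lemma Jensen_involution_invariant (f : T -> R) : is_Jensen g f ->
  forall x t, involution t -> f (x ** t) = f x.
Proof.
  intros Hf x t Ht. specialize (Hf x t). rewrite (involution_inv t Ht) in Hf. lra.
Qed.

Lemma X_hom_one (f : T -> R) : X_hom g f -> f 1 = 0.
Proof. intro Hf. specialize (Hf 1 1). rewrite gmul1g in Hf. lra. Qed.

Lemma X_hom_J0 (f : T -> R) : X_hom g f -> J0 g f.
Proof.
  intro Hf. split; [| exact (X_hom_one f Hf)].
  intros x y. rewrite !Hf.
  assert (Hy : f y + f (inv y) = 0) by (rewrite <- Hf, gmulgV; exact (X_hom_one f Hf)).
  lra.
Qed.

Lemma homogeneous_bounded_eq0 (f : T -> R) : bounded_fun f ->
  (forall x n, f (gpow g x n) = IZR n * f x) -> forall x, f x = 0.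
Proof.
  intros [M HM] Hf x.
  assert (Hle : f x <= 0).
  { apply (multiples_bounded_nonpos _ M). intro n.
    specialize (HM (gpow g x n)). rewrite Hf in HM. rabs_lra. }
  assert (Hge : - f x <= 0).
  { apply (multiples_bounded_nonpos _ M). intro n.
    specialize (HM (gpow g x (- n))). rewrite Hf, opp_IZR in HM. rabs_lra. }
  lra.
Qed.

Section BoundedInvolutionLength.
Variable N : nat.
Hypothesis HN : involution_length_le N.

Lemma dist_from_one_le (f : T -> R) (e : R) : 0 <= e ->
  (forall x t, involution t -> Rabs (f (x ** t) - f x) <= e) ->
  forall x, Rabs (f x - f 1) <= INR N * e.
Proof.
  intros He0 He x. destruct (HN x) as [ts [Hts [Hlen ->]]].
  assert (Hmono : INR (length ts) * e <= INR N * e).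
  { apply Rmult_le_compat_r; [exact He0 | apply le_INR, Hlen]. }
  pose proof (fold_involutions_dist_le f e He ts 1 Hts). lra.
Qed.

Lemma quasi_Jensen_bounded (f : T -> R) : quasi_Jensen g f -> bounded_fun f.
Proof.
  intro Hf. destruct (quasi_Jensen_involution_lipschitz f Hf) as [e [He0 He]].
  exists (Rabs (f 1) + INR N * e). intro x.
  pose proof (dist_from_one_le f e He0 He x). rabs_lra.
Qed.

Lemma pseudo_Jensen_iff_zero (f : T -> R) : pseudo_Jensen g f <-> forall x, f x = 0.
Proof.
  split.
  - intros [Hq Hhom]. exact (homogeneous_bounded_eq0 f (quasi_Jensen_bounded f Hq) Hhom).
  - intro H0. split.
    + exists 1%R. split; [lra |]. intros x y. rewrite !H0. rabs_lra.
    + intros x n. rewrite !H0. ring.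
Qed.

Lemma involution_invariant_const (f : T -> R) :
  (forall x t, involution t -> f (x ** t) = f x) -> forall x, f x = f 1.
Proof.
  intros Hf x.
  assert (Hc : Rabs (f x - f 1) <= INR N * 0).
  { apply dist_from_one_le; [lra |]. intros y t Ht.
    rewrite (Hf y t Ht), Rminus_diag, Rabs_R0. lra. }
  rewrite Rmult_0_r in Hc. rabs_lra.
Qed.

Lemma J0_iff_zero (f : T -> R) : J0 g f <-> forall x, f x = 0.
Proof.
  split.
  - intros [Hf H1] x. rewrite <- H1.
    exact (involution_invariant_const f (Jensen_involution_invariant f Hf) x).
  - intro H0. split; [intros x y; rewrite !H0; ring | apply H0].
Qed.

Lemma X_hom_iff_zero (f : T -> R) : X_hom g f <-> forall x, f x = 0.
Proof.
  split.
  - intro Hf. apply J0_iff_zero, X_hom_J0, Hf.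
  - intros H0 x y. rewrite !H0. ring.
Qed.

End BoundedInvolutionLength.

Section Primitive.
Variable h : Z -> T.

Fixpoint primitive_pos (m : nat) : T :=
  match m with O => 1 | S m' => h (Z.of_nat (S m')) ** primitive_pos m' end.

Fixpoint primitive_neg (m : nat) : T :=
  match m with O => 1 | S m' => inv (h (- Z.of_nat m')) ** primitive_neg m' end.

Definition primitive (z : Z) : T :=
  if (0 <=? z)%Z then primitive_pos (Z.to_nat z) else primitive_neg (Z.to_nat (- z)).

Lemma primitive_nonpos z : (z <= 0)%Z -> primitive z = primitive_neg (Z.to_nat (- z)).
Proof.
  intro Hz. unfold primitive. destruct (Z.leb_spec 0 z); [| reflexivity].
  replace z with 0%Z by lia. reflexivity.
Qed.

Lemma primitive_succ n : primitive n = h n ** primitive (n - 1).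
Proof.
  destruct (Z_le_gt_dec n 0) as [Hn | Hn].
  - rewrite (primitive_nonpos n Hn), (primitive_nonpos (n - 1)) by lia.
    replace (Z.to_nat (- (n - 1))) with (S (Z.to_nat (- n))) by lia. simpl.
    rewrite Z2Nat.id, Z.opp_involutive by lia.
    rewrite gmulA, gmulgV, gmul1g. reflexivity.
  - unfold primitive. destruct (Z.leb_spec 0 n), (Z.leb_spec 0 (n - 1)); try lia.
    replace (Z.to_nat n) with (S (Z.to_nat (n - 1))) by lia. simpl.
    f_equal. f_equal. lia.
Qed.

End Primitive.

Lemma exists_primitive (h : Z -> T) : exists p : Z -> T, forall n, h n = p n ** inv (p (n - 1)%Z).
Proof.
  exists (primitive h). intro n.
  rewrite primitive_succ, <- gmulA, gmulgV, gmulg1. reflexivity.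
Qed.

End Group.

Open Scope Z_scope.

Section Wreath.
Context {A : Type} (gA : group_on A).
Local Notation "x ** y" := (gmul gA x y) (at level 40, left associativity).
Local Notation inv := (ginv gA).

(* [Wreath h e k] is the pair of the coordinate function h and the isometry
   of Z given by n |-> k - n if e, n |-> k + n otherwise. *)
Record wreath := Wreath { wcoord : Z -> A; wflip : bool; wshift : Z }.

Definition isom_app (e : bool) (k n : Z) : Z := if e then k - n else k + n.
Definition isom_inv_app (e : bool) (k n : Z) : Z := if e then k - n else n - k.

Definition wmul (x y : wreath) : wreath :=
  Wreath (fun n => wcoord x n ** wcoord y (isom_inv_app (wflip x) (wshift x) n))
         (xorb (wflip x) (wflip y)) (isom_app (wflip x) (wshift x) (wshift y)).
Definition wone : wreath := Wreath (fun _ => gone gA) false 0.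
Definition winv (x : wreath) : wreath :=
  Wreath (fun n => inv (wcoord x (isom_app (wflip x) (wshift x) n))) (wflip x)
         (if wflip x then wshift x else - wshift x).

Lemma wreath_ext (x y : wreath) :
  (forall n, wcoord x n = wcoord y n) -> wflip x = wflip y -> wshift x = wshift y -> x = y.
Proof.
  destruct x, y; simpl; intros H -> ->. f_equal. apply functional_extensionality, H.
Qed.

Lemma wmulA x y z : wmul x (wmul y z) = wmul (wmul x y) z.
Proof.
  destruct x as [h1 e1 k1], y as [h2 e2 k2], z as [h3 e3 k3].
  apply wreath_ext; simpl.
  - intro n. rewrite gmulA. do 2 f_equal.
    destruct e1, e2; unfold isom_app, isom_inv_app; simpl; lia.
  - destruct e1, e2, e3; reflexivity.
  - destruct e1, e2; unfold isom_app; simpl; lia.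
Qed.

Lemma wmul1w x : wmul wone x = x.
Proof.
  destruct x as [h e k]. apply wreath_ext; simpl.
  - intro n. rewrite gmul1g. f_equal. unfold isom_inv_app; simpl; lia.
  - reflexivity.
  - unfold isom_app; simpl; lia.
Qed.

Lemma wmulVw x : wmul (winv x) x = wone.
Proof.
  destruct x as [h e k]. apply wreath_ext; simpl.
  - intro n. replace (isom_inv_app e (if e then k else - k) n) with (isom_app e k n)
      by (destruct e; unfold isom_app, isom_inv_app; lia).
    apply gmulVg.
  - destruct e; reflexivity.
  - destruct e; unfold isom_app; lia.
Qed.

Definition wreath_group : group_on wreath := GroupOn wreath wmul wone winv wmulA wmul1w wmulVw.

Definition wconst (a : A) : wreath := Wreath (fun _ => a) false 0.

Lemma wconst_inj a b : wconst a = wconst b -> a = b.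
Proof. intro H. exact (f_equal (fun x => wcoord x 0) H). Qed.

Lemma wconst_hom : group_hom gA wreath_group wconst.
Proof. intros a b. apply wreath_ext; reflexivity. Qed.

Definition wrefl (u : Z -> A) (a : Z) : wreath := Wreath u true a.

Lemma wrefl_involution u a :
  (forall n, u n ** u (a - n) = gone gA) -> involution wreath_group (wrefl u a).
Proof. intro Hu. apply wreath_ext; simpl; [exact Hu | reflexivity | unfold isom_app; lia]. Qed.

Definition coboundary (p : Z -> A) (a n : Z) : A := p n ** inv (p (a - n)).

Lemma wrefl_coboundary_involution p a : involution wreath_group (wrefl (coboundary p a) a).
Proof.
  apply wrefl_involution. intro n. unfold coboundary.
  replace (a - (a - n)) with n by lia.
  rewrite <- gmulA, (gmulA _ gA (inv (p (a - n)))), gmulVg, gmul1g, gmulgV. reflexivity.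
Qed.

Lemma wmul_wrefl1_wrefl0 u v :
  wmul (wrefl u 1) (wrefl v 0) = Wreath (fun n => u n ** v (1 - n)) false 1.
Proof. apply wreath_ext; reflexivity. Qed.

Lemma wmul_isom x e k :
  wmul x (Wreath (fun _ => gone gA) e k)
  = Wreath (wcoord x) (xorb (wflip x) e) (isom_app (wflip x) (wshift x) k).
Proof. apply wreath_ext; simpl; [intro; apply gmulg1 | reflexivity | reflexivity]. Qed.

Lemma wreath_involution_length : involution_length_le wreath_group 6.
Proof.
  intros [h e k]. destruct (exists_primitive gA h) as [p Hp].
  set (r a := Wreath (fun _ => gone gA) true a).
  assert (Hr : forall a, involution wreath_group (r a)).
  { intro a. apply wrefl_involution. intro. apply gmul1g. }
  exists ([wrefl (coboundary p 1) 1; wrefl (coboundary p 0) 0; r 0; r 1; r k]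
          ++ if e then [] else [r 0]).
  split; [| split].
  - apply Forall_app. split.
    + repeat constructor; auto using wrefl_coboundary_involution.
    + destruct e; repeat constructor; auto.
  - destruct e; simpl; lia.
  - assert (Hbase : forall n, coboundary p 1 n ** coboundary p 0 (1 - n) = h n).
    { intro n. unfold coboundary. rewrite Hp.
      replace (0 - (1 - n)) with (n - 1) by lia.
      rewrite <- gmulA, (gmulA _ gA (inv (p (1 - n)))), gmulVg, gmul1g. reflexivity. }
    (* The two decorated reflections give (h, n |-> n + 1); right
       multiplication by plain reflections changes only the isometry. *)
    destruct e; cbn [fold_left app gmul wreath_group]; unfold r;
      rewrite wmul1w, wmul_wrefl1_wrefl0, !wmul_isom;
      apply wreath_ext; simpl; auto; unfold isom_app; lia.
Qed.

End Wreath.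

Open Scope R_scope.

Theorem theorem4p1 (A : Type) (gA : group_on A) :
  exists (G : Type) (gG : group_on G) (phi : A -> G),
    (forall a b, phi a = phi b -> a = b) /\ group_hom gA gG phi /\
    (forall f : G -> R, (pseudo_Jensen gG f <-> J0 gG f) /\ (J0 gG f <-> X_hom gG f)) /\
    (forall f : G -> R, quasi_Jensen gG f ->
       exists j : G -> R, is_Jensen gG j /\ bounded_fun (fun x => j x - f x)).
Proof.
  pose proof (wreath_involution_length gA) as HN.
  exists (@wreath A), (wreath_group gA), wconst.
  split; [exact wconst_inj |].
  split; [exact (wconst_hom gA) |].
  split.
  - intro f. rewrite (pseudo_Jensen_iff_zero _ _ HN), (J0_iff_zero _ _ HN), (X_hom_iff_zero _ _ HN).
    tauto.
  - intros f Hf. exists (fun _ => 0). split.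
    + intros x y. ring.
    + destruct (quasi_Jensen_bounded _ _ HN f Hf) as [M HM].
      exists M. intro x. rewrite Rminus_0_l, Rabs_Ropp. apply HM.
Qed.
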